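(* Let $\Gamma$ be a finite simple graph with a linear order on $V(\Gamma)$. Let $n\ge1$ and $a,g,b\in G(\Gamma)$ such that $ag^nb$ is geodesic (i.e. $|ag^nb|=|a|+n|g|+|b|$) and $g$ is strongly non-split and SD-conical. Then $$\sigma(ag^nb)\equiv\sigma(a)\underbrace{\sigma(g)\cdots\sigma(g)}_{n-1}\sigma(gb).$$
   Context: $G(\Gamma)=\langle v\in V(\Gamma)\mid [v_i,v_j]=1 \text{ if } \{v_i,v_j\}\notin E(\Gamma)\rangle$. $|g|$ is word length; reduced word = shortest representative; $\mathrm{supp}(g)$ = set of generators $v$ with $v^{\pm1}$ in a reduced word for $g$; $\equiv$ is letterwise equality of words. $g_1,g_2$ disjointly commute if their supports are disjoint and every generator of one commutes with every generator of the other (i.e. they are non-adjacent in $\Gamma$). $g$ is non-split if $\mathrm{supp}(g)$ spans a connected subgraph; strongly non-split if non-split and no generator disjointly commutes with $g$. $S(g)$ = set of $v\in V(\Gamma)$ such that some reduced word for $g$ begins with $v^{\pm1}$. $g$ is conical with apex $v_0$ if $S(g)=\{v_0\}$; SD-conical if moreover $v<v_0$ implies $\{v,v_0\}\in E(\Gamma)$. A reduced word for $g$ is initially normal if it is empty or its first letter is $v^{\pm1}$ with $v$ the largest element of $S(g)$; normal if all its suffixes are initially normal; $\sigma(g)$ is the unique normal word representing $g$ (CGW-normal form). *)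

(* Right-angled Artin groups G(Gamma) with the convention of
   the paper: generators u, v commute iff {u,v} is NOT an edge. *)
From mathcomp Require Import all_boot all_order.
Set Implicit Arguments. Unset Strict Implicit. Unset Printing Implicit Defensive.
Import Order.TTheory.
Local Open Scope order_scope.

Section RAAG.
Variables (disp : Order.disp_t) (V : finOrderType disp) (E : rel V).

(* a letter (v, b) stands for v^{+1} if b = true and v^{-1} if b = false *)
Definition letter := (V * bool)%type.
Definition word := seq letter.
Definition linv (x : letter) : letter := (x.1, ~~ x.2).

Inductive weq : word -> word -> Prop :=
| weq_refl w : weq w w
| weq_sym w1 w2 : weq w1 w2 -> weq w2 w1
| weq_trans w1 w2 w3 : weq w1 w2 -> weq w2 w3 -> weq w1 w3
| weq_cancel (l r : word) (x : letter) : weq (l ++ [:: x; linv x] ++ r) (l ++ r)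
| weq_comm (l r : word) (x y : letter) :
    ~~ E x.1 y.1 -> weq (l ++ [:: x; y] ++ r) (l ++ [:: y; x] ++ r).

Definition reduced (w : word) : Prop := forall w', weq w w' -> (size w <= size w')%N.

Definition wpow (n : nat) (w : word) : word := flatten (nseq n w).

Definition supp (w : word) (v : V) : Prop :=
  exists w', weq w w' /\ reduced w' /\ v \in map fst w'.

Definition non_split (w : word) : Prop :=
  forall u v, supp w u -> supp w v ->
    exists p : seq V, path E u p /\ last u p = v /\ (forall x, x \in p -> supp w x).

Definition gen_disj_comm (v : V) (w : word) : Prop :=
  ~ supp w v /\ (forall u, supp w u -> ~~ E v u).

Definition strongly_non_split (w : word) : Prop :=
  non_split w /\ forall v, ~ gen_disj_comm v w.

Definition start_set (w : word) (v : V) : Prop :=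
  exists w' x, weq w w' /\ reduced w' /\ ohead w' = Some x /\ x.1 = v.

Definition conical (w : word) (v0 : V) : Prop :=
  forall v, start_set w v <-> v = v0.

Definition SD_conical (w : word) : Prop :=
  exists v0, conical w v0 /\ forall v, v < v0 -> E v v0.

Definition initially_normal (w : word) : Prop :=
  reduced w /\
  match w with
  | [::] => True
  | x :: _ => forall u, start_set w u -> u <= x.1
  end.

Definition normal (w : word) : Prop :=
  forall k, initially_normal (drop k w).

Definition is_nf (w s : word) : Prop := weq w s /\ normal s.

End RAAG.

(* Piling (Crisp-Godelle-Wiest).  For every vertex v record the column of the
   heap of a word: its letters v^(+-1), and a blocking piece for each letter on
   a neighbour of v.  Piles are invariant under the
   defining relations and a reduced word piles without cancellation, so the
   vertices starting reduced representatives of an element are those whose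
   column has a letter on top, and a normal form is determined by its pile.

   The word sigma(a) sigma(g)^(n-1) sigma(gb) represents ag^nb and has the
   geodesic length, so it is reduced; it remains to see that its suffixes
   beginning inside a factor sigma(a) or sigma(g) are initially normal.  A
   vertex u starting such a suffix either starts the rest of that factor, hence
   is at most its first letter z, or has an empty column there.  In the latter
   case u starts g, since strong non-splitness makes every column of g
   nonempty, so u is the apex v0 of g; as z does not touch v0, SD-conicality
   rules out z < v0. *)

From mathcomp Require Import all_boot all_order.
Set Implicit Arguments. Unset Strict Implicit. Unset Printing Implicit Defensive.
Import Order.TTheory.

Lemma nseq_cat_cons (T : Type) (a : T) k s : nseq k a ++ a :: s = a :: nseq k a ++ s.
Proof. by elim: k => //= k ->. Qed.

Section Piling.
Variables (disp : Order.disp_t) (V : finOrderType disp) (E : rel V).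
Hypotheses (E_sym : symmetric E) (E_irr : irreflexive E).

Local Notation letter := (letter V).
Local Notation word := (word V).
Local Notation weq := (weq E).
Local Notation reduced := (reduced E).

Definition piece := option bool.

Definition touches (v : V) (x : letter) : bool := (x.1 == v) || E x.1 v.

Definition piece_at (v : V) (x : letter) : piece :=
  if x.1 == v then Some x.2 else None.

(* Column [v] of the heap of [w], read from the first letter on: [Some b] for
   each letter [v^b], [None] for each letter on a neighbour of [v], which keeps
   the letters [v^b] after it from moving to the front. *)
Definition stack (w : word) (v : V) : seq piece :=
  [seq piece_at v x | x <- w & touches v x].

Definition cancels (x : letter) (p : V -> seq piece) : bool :=
  head None (p x.1) == Some (~~ x.2).

Definition push (x : letter) (p : V -> seq piece) : V -> seq piece :=
  fun v => if touches v x then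
             (if cancels x p then behead (p v) else piece_at v x :: p v)
           else p v.

Definition pile (w : word) : V -> seq piece := foldr push (fun _ => [::]) w.

Fixpoint cancel_free (w : word) : bool :=
  if w is x :: w' then cancel_free w' && ~~ cancels x (stack w') else true.

Definition stackable (p : V -> seq piece) : Prop :=
  exists w, cancel_free w /\ p =1 stack w.

Local Notation avoids v l := (all (fun y => ~~ touches v y) l).

Lemma stack_cons x w v :
  stack (x :: w) v = if touches v x then piece_at v x :: stack w v else stack w v.
Proof. by rewrite /stack /=; case: touches. Qed.

Lemma stack_cat l r v : stack (l ++ r) v = stack l v ++ stack r v.
Proof. by rewrite /stack filter_cat map_cat. Qed.

Lemma touches_fst x : touches x.1 x.
Proof. by rewrite /touches eqxx. Qed.

Lemma touches_linv v x : touches v (linv x) = touches v x.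
Proof. by []. Qed.

Lemma linvK : involutive (@linv _ V).
Proof. by case=> v b; rewrite /linv /= negbK. Qed.

Lemma stack_avoid v l : avoids v l -> stack l v = [::].
Proof. by elim: l => //= y l IH /andP [/negbTE y_v /IH]; rewrite stack_cons y_v. Qed.

Lemma stack_avoid_adj v u l :
  E v u -> avoids v l -> stack l u = nseq (size (stack l u)) None.
Proof.
move=> Evu; elim: l => //= y l IH /andP [y_v /IH {}IH]; rewrite stack_cons.
case: touches => //=; rewrite /piece_at; case: eqP => [y_u|_]; last by rewrite -IH.
by move: y_v; rewrite /touches y_u E_sym Evu orbT.
Qed.

Lemma stack_head_split w v b :
  head None (stack w v) = Some b -> exists l r, w = l ++ (v, b) :: r /\ avoids v l.
Proof.
elim: w => [|y w IH] //; rewrite stack_cons.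
case y_v: (touches v y) => /=.
  rewrite /piece_at; case: eqP => // <- [<-]; exists [::], w.
  by case: y {y_v}.
move/IH => [l [r [-> l_v]]]; exists (y :: l), r; by rewrite /= y_v.
Qed.

Lemma cancels_split x w :
  cancels x (stack w) -> exists l r, w = l ++ linv x :: r /\ avoids x.1 l.
Proof. by move/eqP/stack_head_split. Qed.

Lemma stack_swap x l r : avoids x.1 l -> stack (x :: l ++ r) =1 stack (l ++ x :: r).
Proof.
move=> l_x v; rewrite stack_cons !stack_cat stack_cons.
case x_v: (touches v x) => //.
case: (eqVneq x.1 v) => [<-|xv]; first by rewrite stack_avoid.
have Exv : E x.1 v by move: x_v; rewrite /touches (negbTE xv).
by rewrite (stack_avoid_adj Exv l_x) /piece_at (negbTE xv) nseq_cat_cons.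
Qed.

Lemma push_ext x p q : p =1 q -> push x p =1 push x q.
Proof. by move=> pq v; rewrite /push /cancels !pq. Qed.

Lemma foldr_push_ext l p q : p =1 q -> foldr push p l =1 foldr push q l.
Proof. by elim: l => //= x l IH /IH; apply: push_ext. Qed.

Lemma push_untouched y p v : ~~ touches v y -> push y p v = p v.
Proof. by rewrite /push => /negbTE ->. Qed.

Lemma push_stack x w : ~~ cancels x (stack w) -> push x (stack w) =1 stack (x :: w).
Proof. by move=> /negbTE x_w v; rewrite /push x_w stack_cons. Qed.

Lemma push_stack_linv x w : push x (stack (linv x :: w)) =1 stack w.
Proof.
move=> v; rewrite /push /cancels !stack_cons !touches_linv touches_fst /piece_at /= !eqxx.
by case: (touches v x).
Qed.

Lemma push_stack_cancel x l r :
  avoids x.1 l -> push x (stack (l ++ linv x :: r)) =1 stack (l ++ r).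
Proof.
move=> l_x v; rewrite -(push_stack_linv x (l ++ r) v).
by apply: push_ext => u; rewrite stack_swap.
Qed.

Lemma cancel_free_suffix l r : cancel_free (l ++ r) -> cancel_free r.
Proof. by elim: l => //= y l IH /andP [/IH]. Qed.

Lemma cancel_free_remove x l r :
  avoids x.1 l -> cancel_free (l ++ linv x :: r) -> cancel_free (l ++ r).
Proof.
elim: l => [|z l IH] /=; first by move=> _ /andP [].
case/andP=> z_x l_x /andP [cf_lr z_lr]; rewrite IH //=.
suff z_linv : touches z.1 (linv x) = false.
  by move: z_lr; rewrite /cancels !stack_cat stack_cons z_linv.
by move: z_x; rewrite /touches /= eq_sym E_sym negb_or => /andP [/negbTE -> /negbTE ->].
Qed.

Lemma stackable_push x p : stackable p -> stackable (push x p).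
Proof.
move=> [w [cf_w p_w]].
case x_w: (cancels x (stack w)).
  have [l [r [w_lr l_x]]] := cancels_split x_w.
  exists (l ++ r); split; first by apply: (cancel_free_remove l_x); rewrite -w_lr.
  by move=> v; rewrite (push_ext _ p_w) w_lr push_stack_cancel.
exists (x :: w); split; first by rewrite /= cf_w x_w.
by move=> v; rewrite (push_ext _ p_w) push_stack ?x_w.
Qed.

Lemma push_linvK x p : stackable p -> push x (push (linv x) p) =1 p.
Proof.
move=> [w [cf_w p_w]] v; rewrite (push_ext _ (push_ext _ p_w)) p_w.
case x_w: (cancels (linv x) (stack w)); last first.
  by rewrite (push_ext _ (push_stack (negbT x_w))) push_stack_linv.
have [l [r [w_lr l_x]]] := cancels_split x_w; rewrite /= in l_x.
have /andP [_ x_r] : cancel_free (x :: r).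
  by apply: (@cancel_free_suffix l); rewrite -[x]linvK -w_lr.
rewrite w_lr (push_ext _ (@push_stack_cancel (linv x) l r l_x)) linvK push_stack.
  exact: (@stack_swap x l r l_x v).
by rewrite /cancels stack_cat stack_avoid.
Qed.

Lemma cancels_top_adj x p u :
  stackable p -> cancels x p -> E x.1 u -> exists t, p u = None :: t.
Proof.
move=> [w [_ p_w]]; rewrite /cancels !p_w -/(cancels x (stack w)) => x_w Exu.
have [l [r [-> l_x]]] := cancels_split x_w.
have xu : x.1 != u by apply: contraTneq Exu => ->; rewrite E_irr.
rewrite stack_cat (stack_avoid_adj Exu l_x) stack_cons touches_linv.
by rewrite /touches /piece_at /= (negbTE xu) Exu nseq_cat_cons; eexists.
Qed.

Lemma cancels_push x y p : ~~ touches x.1 y -> cancels x (push y p) = cancels x p.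
Proof. by move=> y_x; rewrite /cancels push_untouched. Qed.

Lemma push_comm_distinct x y p :
  stackable p -> x.1 != y.1 -> ~~ E x.1 y.1 -> push x (push y p) =1 push y (push x p).
Proof.
move=> pP xy nE v.
have y_x : ~~ touches x.1 y by rewrite /touches eq_sym E_sym negb_or xy nE.
have x_y : ~~ touches y.1 x by rewrite /touches negb_or xy nE.
rewrite {1}/push (cancels_push _ y_x) [in RHS]/push (cancels_push _ x_y) /push.
case x_v: (touches v x); case y_v: (touches v y) => //=.
have xv : x.1 != v by apply: contraNneq y_x => ->.
have yv : y.1 != v by apply: contraNneq x_y => ->.
have Exv : E x.1 v by move: x_v; rewrite /touches (negbTE xv).
have Eyv : E y.1 v by move: y_v; rewrite /touches (negbTE yv).
rewrite /piece_at (negbTE xv) (negbTE yv).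
case x_p: (cancels x p); case y_p: (cancels y p) => //=.
- by have [t ->] := cancels_top_adj pP x_p Exv.
- by have [t ->] := cancels_top_adj pP y_p Eyv.
Qed.

Lemma push_comm x y p :
  stackable p -> ~~ E x.1 y.1 -> push x (push y p) =1 push y (push x p).
Proof.
move=> pP nE; case: (eqVneq x.1 y.1) => [xy|xy]; last exact: push_comm_distinct.
case: (eqVneq x y) => [-> //|x_ne_y].
have -> : y = linv x.
  by move: xy x_ne_y {nE}; case: x y => [? [] ] [? [] ] /= <-; rewrite ?eqxx.
move=> v; rewrite push_linvK //.
by have := push_linvK (linv x) pP v; rewrite linvK.
Qed.

Lemma stackable_pile w : stackable (pile w).
Proof. by elim: w => [|x w IH]; [exists [::] | apply: stackable_push]. Qed.

Lemma pile_cat l r : pile (l ++ r) = foldr push (pile r) l.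
Proof. exact: foldr_cat. Qed.

Lemma pile_weq w1 w2 : weq w1 w2 -> pile w1 =1 pile w2.
Proof.
elim=> {w1 w2} [w|w1 w2 _ IH|w1 w2 w3 _ IH1 _ IH2|l r x|l r x y nE] v.
- by [].
- by rewrite IH.
- by rewrite IH1 IH2.
- rewrite !pile_cat; apply: foldr_push_ext => u /=.
  exact: (push_linvK _ (stackable_pile r)).
- rewrite !pile_cat; apply: foldr_push_ext => u /=.
  exact: (push_comm (stackable_pile r) nE).
Qed.

Lemma pile_cancel_free w : cancel_free w -> pile w =1 stack w.
Proof.
elim: w => [|x w IH] //= /andP [/IH w_pile x_w] v.
by rewrite (push_ext _ w_pile) push_stack.
Qed.

Lemma weq_catl s u u' : weq u u' -> weq (s ++ u) (s ++ u').
Proof.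
elim=> {u u'} [w|w1 w2 _|w1 w2 w3 _ W12 _|l r x|l r x y nE].
- exact: weq_refl.
- exact: weq_sym.
- exact: weq_trans.
- by have := @weq_cancel _ _ E (s ++ l) r x; rewrite -!catA.
- by have := @weq_comm _ _ E (s ++ l) r x y nE; rewrite -!catA.
Qed.

Lemma weq_catr s u u' : weq u u' -> weq (u ++ s) (u' ++ s).
Proof.
elim=> {u u'} [w|w1 w2 _|w1 w2 w3 _ W12 _|l r x|l r x y nE].
- exact: weq_refl.
- exact: weq_sym.
- exact: weq_trans.
- by have := @weq_cancel _ _ E l (r ++ s) x; rewrite -!catA.
- by have := @weq_comm _ _ E l (r ++ s) x y nE; rewrite -!catA.
Qed.

Lemma weq_cat u u' s s' : weq u u' -> weq s s' -> weq (u ++ s) (u' ++ s').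
Proof. by move=> /(weq_catr s) W1 /(weq_catl u') W2; apply: weq_trans W1 W2. Qed.

Lemma weq_move_front y l r : avoids y.1 l -> weq (l ++ y :: r) (y :: l ++ r).
Proof.
elim: l => [|z l IH] /=; first by move=> _; apply: weq_refl.
case/andP=> z_y /IH /(weq_catl [:: z]) W; apply: weq_trans W _.
apply: (@weq_comm _ _ E [::] (l ++ r) z y).
by move: z_y; rewrite /touches negb_or E_sym => /andP [].
Qed.

Lemma reduced_cancel_free w : reduced w -> cancel_free w.
Proof.
elim: w => //= x w IH Rxw.
have Rw : reduced w by move=> w' /(weq_catl [:: x]) /Rxw.
rewrite IH //=; apply/negP => /cancels_split [l [r [w_lr l_x]]].
have : weq (x :: w) (l ++ r).
  rewrite w_lr; apply: weq_trans (weq_catl [:: x] (@weq_move_front (linv x) l r l_x)) _.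
  exact: (@weq_cancel _ _ E [::] (l ++ r) x).
by move/Rxw; rewrite w_lr /= !size_cat /= addnS => /ltnW; rewrite ltnn.
Qed.

Lemma pile_reduced w : reduced w -> pile w =1 stack w.
Proof. by move/reduced_cancel_free/pile_cancel_free. Qed.

Lemma stack_weq_reduced u u' : reduced u -> reduced u' -> weq u u' -> stack u =1 stack u'.
Proof. by move=> Ru Ru' W v; rewrite -(pile_reduced Ru) -(pile_reduced Ru'); apply: pile_weq. Qed.

Lemma reduced_suffix u v : reduced (u ++ v) -> reduced v.
Proof. by move=> R w /(weq_catl u) /R; rewrite !size_cat leq_add2l. Qed.

Lemma reduced_prefix u v : reduced (u ++ v) -> reduced u.
Proof. by move=> R w /(weq_catr v) /R; rewrite !size_cat leq_add2r. Qed.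

Lemma reduced_weq_size u u' : reduced u -> weq u u' -> size u' = size u -> reduced u'.
Proof. by move=> Ru W size_u w /(weq_trans W) /Ru; rewrite size_u. Qed.

Lemma size_reduced_weq u u' : reduced u -> reduced u' -> weq u u' -> size u = size u'.
Proof. by move=> Ru Ru' W; apply/eqP; rewrite eqn_leq (Ru _ W) (Ru' _ (weq_sym W)). Qed.

Lemma reduced_cat_weq u v u' v' :
  reduced (u ++ v) -> reduced u' -> reduced v' -> weq u u' -> weq v v' ->
  reduced (u' ++ v').
Proof.
move=> R Ru' Rv' Wu Wv; apply: (reduced_weq_size R (weq_cat Wu Wv)).
rewrite !size_cat (size_reduced_weq (reduced_prefix R) Ru' Wu).
by rewrite (size_reduced_weq (reduced_suffix R) Rv' Wv).
Qed.

Lemma start_setP s u : reduced s -> start_set E s u <-> isSome (head None (stack s u)).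
Proof.
move=> Rs; split.
  move=> [w [x [s_w [Rw [w_x <-]]]]]; rewrite (stack_weq_reduced Rs Rw s_w).
  by case: w w_x {s_w Rw} => //= y w [->]; rewrite stack_cons touches_fst /piece_at eqxx.
case s_u: (head None (stack s u)) => [b|] // _.
have [l [r [s_lr l_u]]] := stack_head_split s_u.
have W : weq s ((u, b) :: l ++ r) by rewrite s_lr; apply: weq_move_front.
exists ((u, b) :: l ++ r), (u, b); split=> //; split=> //.
by apply: (reduced_weq_size Rs W); rewrite s_lr /= !size_cat /= addnS.
Qed.

Lemma start_set_weq w w' u : weq w w' -> start_set E w' u -> start_set E w u.
Proof. by move=> W [w'' [x [W' R]]]; exists w'', x; split=> //; apply: weq_trans W W'. Qed.

Lemma stack_has_piece s v : v \in map fst s -> has isSome (stack s v).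
Proof.
elim: s => //= y s IH; rewrite in_cons stack_cons => /orP [/eqP ->|/IH s_v].
  by rewrite touches_fst /piece_at eqxx.
by case: touches => //=; rewrite s_v orbT.
Qed.

Lemma stack_adj_nonempty s v u : has isSome (stack s v) -> E u v -> stack s u != [::].
Proof.
elim: s => //= y s IH; rewrite !stack_cons => s_v Euv.
case y_u: (touches u y) => //.
suff /IH : has isSome (stack s v) by apply.
move: s_v; case: (touches v y) => //= /orP [|//].
rewrite /piece_at; case: eqP => // y_v _.
by move: y_u; rewrite /touches y_v E_sym Euv orbT.
Qed.

Lemma supp_stack g rg v : weq g rg -> reduced rg -> supp E g v -> has isSome (stack rg v).
Proof.
move=> g_rg Rrg [w [g_w [Rw v_w]]].
rewrite (stack_weq_reduced Rrg Rw (weq_trans (weq_sym g_rg) g_w)).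
exact: stack_has_piece.
Qed.

Lemma strongly_non_split_stack g rg u :
  strongly_non_split E g -> weq g rg -> reduced rg -> stack rg u != [::].
Proof.
move=> [_ no_dc] g_rg Rrg; apply/negP => /eqP rg_u; apply: (no_dc u); split.
  by move/(supp_stack g_rg Rrg); rewrite rg_u.
move=> v /(supp_stack g_rg Rrg) v_rg; apply/negP => Euv.
by have := stack_adj_nonempty v_rg Euv; rewrite rg_u.
Qed.

Lemma normal_reduced s : normal E s -> reduced s.
Proof. by move/(_ 0); rewrite drop0 => -[]. Qed.

Lemma normal_eq_stack s t : normal E s -> normal E t -> stack s =1 stack t -> s = t.
Proof.
elim: s t => [|x s IH] [|y t] Ns Nt st //.
- by have := st y.1; rewrite stack_cons touches_fst.
- by have := st x.1; rewrite stack_cons touches_fst.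
have [[Rs x_max] [Rt y_max]] := (Ns 0, Nt 0).
have x_le_y : (x.1 <= y.1)%O.
  by apply: y_max; apply/(start_setP _ Rt); rewrite -st stack_cons touches_fst /piece_at eqxx.
have y_le_x : (y.1 <= x.1)%O.
  by apply: x_max; apply/(start_setP _ Rs); rewrite st stack_cons touches_fst /piece_at eqxx.
have xy1 : x.1 = y.1 by apply: le_anti; rewrite x_le_y y_le_x.
have xy : x = y.
  move: (st x.1); rewrite !stack_cons touches_fst xy1 touches_fst /piece_at xy1 !eqxx.
  by case=> x2; rewrite [x]surjective_pairing xy1 x2 -surjective_pairing.
subst y; congr (_ :: _); apply: IH => [k|k|v].
- exact: Ns k.+1.
- exact: Nt k.+1.
- by move: (st v); rewrite !stack_cons; case: touches => // -[].
Qed.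

Lemma normal_weq_eq s t : normal E s -> normal E t -> weq s t -> s = t.
Proof.
move=> Ns Nt W; apply: (normal_eq_stack Ns Nt).
exact: stack_weq_reduced (normal_reduced Ns) (normal_reduced Nt) W.
Qed.

Lemma normal_cat s t :
  normal E t -> (forall k, k < size s -> initially_normal E (drop k s ++ t)) ->
  normal E (s ++ t).
Proof. by move=> Nt Ns k; rewrite drop_cat; case: ifP => [/Ns|_]. Qed.

Lemma wpowS m (w : word) : wpow m.+1 w = w ++ wpow m w.
Proof. by []. Qed.

Lemma wpowSr m (w : word) : wpow m.+1 w = wpow m w ++ w.
Proof. by elim: m => [|m IH]; [rewrite /wpow /= cats0 | rewrite wpowS {1}IH catA]. Qed.

Lemma weq_wpow m u u' : weq u u' -> weq (wpow m u) (wpow m u').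
Proof. by move=> W; elim: m => [|m IH]; [apply: weq_refl | apply: weq_cat]. Qed.

Section ConicalFactor.
Variables (g rg : word).
Hypotheses (g_sns : strongly_non_split E g) (g_sd : SD_conical E g).
Hypotheses (g_rg : weq g rg) (rg_red : reduced rg).

Lemma initially_normal_cat s t r :
  s != [::] -> initially_normal E s -> reduced (s ++ t) ->
  weq t (rg ++ r) -> reduced (rg ++ r) -> initially_normal E (s ++ t).
Proof.
have [v0 [g_con g_below]] := g_sd.
case: s => [//|z s] _ [Rs z_max] Rst t_rgr Rrgr; split=> // u /(start_setP _ Rst).
rewrite stack_cat; case zs_u: (stack (z :: s) u) => [|c cs] /= u_top; last first.
  by apply: z_max; apply/(start_setP _ Rs); rewrite zs_u.
(* Column u of z :: s is empty and column u of g is not, so u starts g. *)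
have u_v0 : u = v0.
  apply/g_con/(start_set_weq g_rg)/(start_setP _ rg_red).
  move: u_top; rewrite (stack_weq_reduced (reduced_suffix Rst) Rrgr t_rgr) stack_cat.
  by case: (stack rg u) (strongly_non_split_stack u g_sns g_rg rg_red).
subst u; rewrite leNgt; apply/negP => /g_below Ezv0.
by move: zs_u; rewrite stack_cons /touches Ezv0 orbT.
Qed.

Lemma normal_cat_conical s t r :
  normal E s -> normal E t -> reduced (s ++ t) ->
  weq t (rg ++ r) -> reduced (rg ++ r) -> normal E (s ++ t).
Proof.
move=> Ns Nt Rst t_rgr Rrgr; apply: (normal_cat Nt) => k k_s.
apply: (initially_normal_cat _ (Ns k) _ t_rgr Rrgr).
- by rewrite -size_eq0 size_drop subn_eq0 -ltnNge.
- by apply: (@reduced_suffix (take k s)); rewrite catA cat_take_drop.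
Qed.

Lemma normal_wpow_cat sg sgb rb m :
  normal E sg -> weq sg rg -> normal E sgb -> weq sgb (rg ++ rb) ->
  reduced (rg ++ wpow m rg ++ rb) ->
  normal E (wpow m sg ++ sgb) /\ weq (wpow m sg ++ sgb) (rg ++ wpow m rg ++ rb).
Proof.
move=> Nsg sg_rg Nsgb sgb_rgb; elim: m => [|m IH] Rw; first by [].
rewrite !wpowS -!catA in Rw *.
have [Nt t_rgr] := IH (reduced_suffix Rw).
split; last exact: weq_cat sg_rg t_rgr.
apply: (normal_cat_conical Nsg Nt _ t_rgr (reduced_suffix Rw)).
exact: reduced_cat_weq Rw (normal_reduced Nsg) (normal_reduced Nt) (weq_sym sg_rg) (weq_sym t_rgr).
Qed.

End ConicalFactor.

End Piling.

Theorem proposition2p10 (disp : Order.disp_t) (V : finOrderType disp) (E : rel V)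
  (E_sym : symmetric E) (E_irr : irreflexive E)
  (n : nat) (a g b : word V)
  (hn : 1 <= n)
  (hgeo : exists ra rg rb,
      weq E a ra /\ weq E g rg /\ weq E b rb /\
      reduced E ra /\ reduced E rg /\ reduced E rb /\
      reduced E (ra ++ wpow n rg ++ rb))
  (hsns : strongly_non_split E g)
  (hsd : SD_conical E g)
  (sa sg sgb : word V)
  (hsa : is_nf E a sa) (hsg : is_nf E g sg) (hsgb : is_nf E (g ++ b) sgb) :
  is_nf E (a ++ wpow n g ++ b) (sa ++ wpow n.-1 sg ++ sgb) /\
  (forall s, is_nf E (a ++ wpow n g ++ b) s -> s = sa ++ wpow n.-1 sg ++ sgb).
Proof.
move: hgeo => [ra [rg [rb [a_ra [g_rg [b_rb [_ [rg_red [_ Rw]]]]]]]]].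
case: hsa hsg hsgb => [a_sa Nsa] [g_sg Nsg] [gb_sgb Nsgb].
case: n hn Rw => // m _ Rw; rewrite succnK.
rewrite wpowS -catA in Rw.
have sg_rg : weq E sg rg := weq_trans (weq_sym g_sg) g_rg.
have sgb_rgb : weq E sgb (rg ++ rb) := weq_trans (weq_sym gb_sgb) (weq_cat g_rg b_rb).
have [Nt t_rgr] := normal_wpow_cat E_sym E_irr hsns hsd g_rg rg_red
  Nsg sg_rg Nsgb sgb_rgb (reduced_suffix Rw).
have W : weq E (a ++ wpow m.+1 g ++ b) (sa ++ wpow m sg ++ sgb).
  apply: (weq_cat a_sa); rewrite wpowSr -catA.
  exact: weq_cat (weq_wpow m g_sg) gb_sgb.
have Nst : normal E (sa ++ wpow m sg ++ sgb).
  apply: (normal_cat_conical E_sym E_irr hsns hsd g_rg rg_red Nsa Nt _ t_rgr (reduced_suffix Rw)).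
  exact: reduced_cat_weq Rw (normal_reduced Nsa) (normal_reduced Nt)
    (weq_trans (weq_sym a_ra) a_sa) (weq_sym t_rgr).
split=> // s [W' Ns]; exact: (normal_weq_eq E_sym E_irr Ns Nst (weq_trans (weq_sym W') W)).
Qed.
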